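(* Let $a>4$, $d\ge 4$, and let $G$ be generated by the security model $\mathcal{S}(n,a,d)$. Let $b_0>0$ be a constant, $\delta=\log^{-b_0}n$, $T_0=(1-\delta)n$, and let $b_1$ satisfy $2<b_1<a-b_0$. Then with probability $1-o(1)$, every homochromatic set created before time step $T_0$ has size $\Omega(\log^{b_1}n)$.
   Context: Security model $\mathcal{S}(n,a,d)$ (homophyly exponent $a$, natural number $d$): start with an initial graph $G_2$ on two nodes, each of which is a seed node with its own distinct color. For $i=3,\dots,n$, given $G_{i-1}$, let $p_i=(\log i)^{-a}$ and create a new node $v$ (at time step $i$). With probability $p_i$, $v$ receives a brand-new color $c$ and is called the seed node of $c$; then one edge $(v,u)$ is added with $u$ chosen with probability proportional to degrees in $G_{i-1}$, and $d-1$ edges $(v,u_j)$ are added, each $u_j$ chosen uniformly at random among all seed nodes of $G_{i-1}$. Otherwise, $v$ picks a color $c$ uniformly at random among all colors present in $G_{i-1}$, takes color $c$, and $d$ edges $(v,u_j)$ are added, each $u_j$ chosen with probability proportional to degree among the nodes of color $c$ in $G_{i-1}$. The network is $G=G_n$. A homochromatic set is the set of all nodes of $G$ of one color; it is created at the time step its seed node is created. *)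

From Stdlib Require Import Reals List Arith Lra.
Import ListNotations.
Open Scope R_scope.

(** Finite discrete distributions, as lists of (weight, outcome). *)
Definition dist (A : Type) := list (R * A).

Definition ret {A} (x : A) : dist A := [(1, x)].

Definition bind {A B} (m : dist A) (f : A -> dist B) : dist B :=
  flat_map (fun '(p, x) => map (fun '(q, y) => (p * q, y)) (f x)) m.

Definition mix {A} (p : R) (m1 m2 : dist A) : dist A :=
  map (fun '(q, x) => (p * q, x)) m1 ++ map (fun '(q, x) => ((1 - p) * q, x)) m2.

Definition uniform (l : list nat) : dist nat :=
  map (fun u => (/ INR (length l), u)) l.

Definition weighted (w : nat -> R) (l : list nat) : dist nat :=
  let tot := fold_right Rplus 0 (map w l) in
  map (fun u => (w u / tot, u)) l.

Fixpoint iid {A} (k : nat) (m : dist A) : dist (list A) :=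
  match k with
  | O => ret []
  | S k' => bind m (fun x => bind (iid k' m) (fun xs => ret (x :: xs)))
  end.

Definition prob {A} (m : dist A) (E : A -> bool) : R :=
  fold_right Rplus 0 (map (fun '(p, x) => if E x then p else 0) m).

(** Nodes are 0,1,...,(number of nodes - 1), node j created
    at time step j+1.  [col] gives the color of each node; colors are
    numbered 0,1,... in order of creation, and [seeds] lists the seed node
    of each color (color c has seed [nth c seeds 0]).  [edges] is the
    multiset of (undirected) edges. *)
Record state := mkState { col : list nat; seeds : list nat; edges : list (nat * nat) }.

Definition nnodes (G : state) : nat := length (col G).

Definition color_of (G : state) (u : nat) : nat := nth u (col G) 0%nat.

Definition deg (G : state) (u : nat) : R :=
  INR (length (filter (fun e => Nat.eqb (fst e) u) (edges G))
       + length (filter (fun e => Nat.eqb (snd e) u) (edges G))).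

Definition nodes_of_color (G : state) (c : nat) : list nat :=
  filter (fun u => Nat.eqb (color_of G u) c) (seq 0 (nnodes G)).

Definition color_time (G : state) (c : nat) : nat := S (nth c (seeds G) 0%nat).

Definition G2 : state := mkState [0%nat; 1%nat] [0%nat; 1%nat] [(0%nat, 1%nat)].

Definition p_ (a : R) (i : nat) : R := Rpower (ln (INR i)) (- a).

Definition step (a : R) (d : nat) (i : nat) (G : state) : dist state :=
  let v := nnodes G in
  mix (p_ a i)
    (bind (weighted (deg G) (seq 0 v)) (fun u =>
     bind (iid (d - 1)%nat (uniform (seeds G))) (fun us =>
     ret (mkState (col G ++ [length (seeds G)]) (seeds G ++ [v])
                  (edges G ++ map (fun w => (v, w)) (u :: us))))))
    (bind (uniform (seq 0 (length (seeds G)))) (fun c =>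
     bind (iid d (weighted (deg G) (nodes_of_color G c))) (fun us =>
     ret (mkState (col G ++ [c]) (seeds G)
                  (edges G ++ map (fun w => (v, w)) us))))).

(** distribution of G_{k+2} *)
Fixpoint model_aux (a : R) (d : nat) (k : nat) : dist state :=
  match k with
  | O => ret G2
  | S k' => bind (model_aux a d k') (step a d (k + 2))
  end.

Definition security_model (a : R) (d n : nat) : dist state :=
  model_aux a d (n - 2).

Definition early_sets_large (T0 bound : R) (G : state) : bool :=
  forallb (fun c =>
    if Rlt_dec (INR (color_time G c)) T0 then
      if Rle_dec bound (INR (length (nodes_of_color G c))) then true else false
    else true)
    (seq 0 (length (seeds G))).

From Pilot Require Import Defs.
From Stdlib Require Import Reals List Lra Lia ZArith.
Import ListNotations.
Open Scope R_scope.

(* Only the colors matter: a step opens a new color with probability [p_i = (ln i)^(-a)]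
   and otherwise adds a node to a uniformly chosen existing color, whatever the degrees.
   Give every color created before [T0] the weight [exp (- size)].  As long as there are
   at most [M] colors, a step multiplies the expected total weight by at most
   [1 - kappa (1 - p_i) / M], so the total weight times [exp (kappa / M * sum (1 - p_i))]
   is a supermartingale after [T0].  At time [n] a small early color forces either more
   than [M] colors, of probability at most [E[#colors] / M = (2 + sum p_i) / M], or a
   total weight above [exp (- (ln n)^b1)], of probability at most
   [exp ((ln n)^b1) * M * exp (- kappa (n - T0) / (2 M))] by Markov's inequality.
   For [M = n / (ln n)^(a - eta)] with [eta = (a - b0 - b1) / 2] both bounds vanish. *)

(** * Finite sums and finite distributions *)

Definition sumR {A} (l : list A) (f : A -> R) : R := fold_right Rplus 0 (map f l).

Lemma sumR_nil {A} (f : A -> R) : sumR [] f = 0.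
Proof. reflexivity. Qed.

Lemma sumR_cons {A} x (l : list A) f : sumR (x :: l) f = f x + sumR l f.
Proof. reflexivity. Qed.

Lemma sumR_app {A} (l1 l2 : list A) f : sumR (l1 ++ l2) f = sumR l1 f + sumR l2 f.
Proof.
  induction l1 as [|x l1 IH]; simpl app.
  - rewrite sumR_nil; ring.
  - rewrite !sumR_cons, IH; ring.
Qed.

Lemma sumR_ext {A} (l : list A) f g :
  (forall x, In x l -> f x = g x) -> sumR l f = sumR l g.
Proof.
  induction l as [|x l IH]; intro H; [reflexivity|].
  rewrite !sumR_cons, (H x (or_introl eq_refl)), IH; [reflexivity|].
  intros y Hy; apply H; right; exact Hy.
Qed.

Lemma sumR_le {A} (l : list A) f g :
  (forall x, In x l -> f x <= g x) -> sumR l f <= sumR l g.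
Proof.
  induction l as [|x l IH]; intro H.
  - rewrite !sumR_nil; lra.
  - rewrite !sumR_cons.
    apply Rplus_le_compat; [apply H; left; reflexivity|].
    apply IH; intros y Hy; apply H; right; exact Hy.
Qed.

Lemma sumR_linear {A} (l : list A) f g a b :
  sumR l (fun x => a * f x + b * g x) = a * sumR l f + b * sumR l g.
Proof.
  induction l as [|x l IH].
  - rewrite !sumR_nil; ring.
  - rewrite !sumR_cons, IH; ring.
Qed.

Lemma sumR_const {A} (l : list A) k : sumR l (fun _ => k) = INR (length l) * k.
Proof.
  induction l as [|x l IH].
  - rewrite sumR_nil; simpl; ring.
  - rewrite sumR_cons, IH; simpl length; rewrite S_INR; ring.
Qed.

Lemma sumR_nonneg {A} (l : list A) f : (forall x, In x l -> 0 <= f x) -> 0 <= sumR l f.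
Proof.
  intro H. replace 0 with (sumR l (fun _ => 0)).
  - now apply sumR_le.
  - rewrite sumR_const; ring.
Qed.

Lemma sumR_ge_term {A} (l : list A) f x :
  (forall y, In y l -> 0 <= f y) -> In x l -> f x <= sumR l f.
Proof.
  induction l as [|y l IH]; intros H Hx; [destruct Hx|].
  rewrite sumR_cons. destruct Hx as [<-|Hx].
  - assert (0 <= sumR l f) by (apply sumR_nonneg; intros; apply H; right; auto). lra.
  - assert (0 <= f y) by (apply H; left; auto).
    assert (f x <= sumR l f) by (apply IH; auto; intros; apply H; right; auto). lra.
Qed.

Lemma sumR_neq0 (w : nat -> R) l x :
  (forall u, 0 <= w u) -> In x l -> 0 < w x -> sumR l w <> 0.
Proof.
  intros Hw Hx Hp. assert (w x <= sumR l w) by (apply sumR_ge_term; auto). lra.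
Qed.

Lemma sumR_seq_indicator (C c0 : nat) h : (c0 < C)%nat ->
  sumR (seq 0 C) (fun c => if Nat.eqb c c0 then h c else 0) = h c0.
Proof.
  intro H. replace C with (c0 + 1 + (C - c0 - 1))%nat by lia.
  rewrite !seq_app, !sumR_app. simpl seq. rewrite sumR_cons, sumR_nil, Nat.eqb_refl.
  rewrite (sumR_ext _ _ (fun _ => 0)), (sumR_ext (seq (0 + c0 + 1) _) _ (fun _ => 0)), !sumR_const.
  - ring.
  - intros x Hx. apply in_seq in Hx. destruct (Nat.eqb_spec x c0); [lia|auto].
  - intros x Hx. apply in_seq in Hx. destruct (Nat.eqb_spec x c0); [lia|auto].
Qed.

Definition expect {A} (m : Defs.dist A) (f : A -> R) : R :=
  sumR m (fun px => fst px * f (snd px)).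

Lemma expect_cons {A} p x (m : Defs.dist A) f : expect ((p, x) :: m) f = p * f x + expect m f.
Proof. reflexivity. Qed.

Lemma expect_app {A} (m1 m2 : Defs.dist A) f : expect (m1 ++ m2) f = expect m1 f + expect m2 f.
Proof. apply sumR_app. Qed.

Lemma expect_ext {A} (m : Defs.dist A) f g : (forall x, f x = g x) -> expect m f = expect m g.
Proof. intro H. apply sumR_ext. intros; now rewrite H. Qed.

Lemma expect_linear {A} (m : Defs.dist A) f g a b :
  expect m (fun x => a * f x + b * g x) = a * expect m f + b * expect m g.
Proof.
  unfold expect. rewrite <- sumR_linear. apply sumR_ext. intros; ring.
Qed.

Lemma expect_const {A} (m : Defs.dist A) k : expect m (fun _ => k) = expect m (fun _ => 1) * k.
Proof.
  rewrite (expect_ext _ _ (fun _ => k * 1 + 0 * 1)) by (intro; ring).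
  rewrite expect_linear; ring.
Qed.

Lemma expect_scale {A} (m : Defs.dist A) p f :
  expect (map (fun '(q, y) => (p * q, y)) m) f = p * expect m f.
Proof.
  induction m as [|[q y] m IH]; [unfold expect, sumR; simpl; ring|].
  simpl map. rewrite !expect_cons, IH. ring.
Qed.

Lemma expect_ret {A} (x : A) f : expect (ret x) f = f x.
Proof. unfold expect, sumR, ret; simpl; ring. Qed.

Lemma expect_bind {A B} (m : Defs.dist A) (g : A -> Defs.dist B) f :
  expect (bind m g) f = expect m (fun x => expect (g x) f).
Proof.
  induction m as [|[p x] m IH]; [reflexivity|].
  unfold bind in *. simpl flat_map.
  rewrite expect_app, expect_scale, expect_cons, IH. reflexivity.
Qed.

Lemma expect_mix {A} p (m1 m2 : Defs.dist A) f :
  expect (mix p m1 m2) f = p * expect m1 f + (1 - p) * expect m2 f.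
Proof. unfold mix. rewrite expect_app, !expect_scale. reflexivity. Qed.

Lemma prob_expect {A} (m : Defs.dist A) E : prob m E = expect m (fun x => if E x then 1 else 0).
Proof.
  induction m as [|[p x] m IH]; [reflexivity|].
  unfold prob in *; simpl. rewrite IH. unfold expect, sumR; simpl. destruct (E x); ring.
Qed.

Lemma expect_map_weights (l : list nat) (w : nat -> R) f :
  expect (map (fun u => (w u, u)) l) f = sumR l (fun u => w u * f u).
Proof.
  induction l as [|u l IH]; [reflexivity|].
  simpl map. rewrite expect_cons, sumR_cons, IH. reflexivity.
Qed.

Lemma expect_uniform l f : expect (uniform l) f = / INR (length l) * sumR l f.
Proof.
  unfold uniform. rewrite expect_map_weights.
  rewrite (sumR_ext _ _ (fun u => / INR (length l) * f u + 0 * f u)) by (intros; ring).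
  rewrite sumR_linear; ring.
Qed.

Lemma expect_weighted w l f :
  expect (weighted w l) f = sumR l (fun u => w u / sumR l w * f u).
Proof. apply expect_map_weights. Qed.

Lemma uniform_mass (l : list nat) : l <> [] -> expect (uniform l) (fun _ => 1) = 1.
Proof.
  intro H. rewrite expect_uniform, sumR_const.
  destruct l as [|x l]; [congruence|]. simpl length. rewrite S_INR.
  pose proof (pos_INR (length l)). field. lra.
Qed.

Lemma weighted_mass w l : sumR l w <> 0 -> expect (weighted w l) (fun _ => 1) = 1.
Proof.
  intro H. rewrite expect_weighted. unfold Rdiv.
  rewrite (sumR_ext _ _ (fun u => / sumR l w * w u + 0 * w u)) by (intros; ring).
  rewrite sumR_linear. field. exact H.
Qed.

Lemma iid_mass {A} k (m : Defs.dist A) :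
  expect m (fun _ => 1) = 1 -> expect (iid k m) (fun _ => 1) = 1.
Proof.
  intro H. induction k as [|k IH]; simpl.
  - exact (expect_ret [] (fun _ => 1)).
  - rewrite expect_bind, (expect_ext _ _ (fun _ => 1)); [exact H|]. intro x.
    rewrite expect_bind, (expect_ext _ _ (fun _ => 1)); [exact IH|]. intro xs.
    apply (expect_ret _ (fun _ => 1)).
Qed.

Definition dist_on {A} (P : A -> Prop) (m : Defs.dist A) : Prop :=
  Forall (fun px => 0 <= fst px /\ P (snd px)) m.

Lemma expect_le {A} (P : A -> Prop) m f g :
  dist_on P m -> (forall x, P x -> f x <= g x) -> expect m f <= expect m g.
Proof.
  intros H Hfg. induction H as [|[p x] m [Hp Hx] _ IH]; [unfold expect, sumR; simpl; lra|].
  rewrite !expect_cons. simpl in Hp, Hx. specialize (Hfg x Hx). nra.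
Qed.

Lemma expect_ext_on {A} (P : A -> Prop) m f g :
  dist_on P m -> (forall x, P x -> f x = g x) -> expect m f = expect m g.
Proof.
  intros H Hfg. apply Rle_antisym; eapply expect_le; eauto; intros x Hx; rewrite (Hfg x Hx); lra.
Qed.

Lemma dist_on_weaken {A} (P Q : A -> Prop) m :
  (forall x, P x -> Q x) -> dist_on P m -> dist_on Q m.
Proof. intro H. apply Forall_impl. intros [p x] [? ?]; split; auto. Qed.

Lemma dist_on_ret {A} (P : A -> Prop) x : P x -> dist_on P (ret x).
Proof. intro. constructor; [simpl; split; [lra|auto] | constructor]. Qed.

Lemma dist_on_scale {A} (P : A -> Prop) p m :
  0 <= p -> dist_on P m -> dist_on P (map (fun '(q, y) => (p * q, y)) m).
Proof.
  intros Hp H. induction H as [|[q y] m [Hq Hy] _ IH]; simpl; constructor; auto.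
  simpl. split; auto. now apply Rmult_le_pos.
Qed.

Lemma dist_on_bind {A B} (P : A -> Prop) (Q : B -> Prop) m g :
  dist_on P m -> (forall x, P x -> dist_on Q (g x)) -> dist_on Q (bind m g).
Proof.
  intros H Hg. induction H as [|[p x] m [Hp Hx] _ IH]; [constructor|].
  unfold bind in *; simpl. apply Forall_app. split; auto. now apply dist_on_scale, Hg.
Qed.

Lemma dist_on_mix {A} (P : A -> Prop) p m1 m2 :
  0 <= p <= 1 -> dist_on P m1 -> dist_on P m2 -> dist_on P (mix p m1 m2).
Proof. intros. unfold mix. apply Forall_app. split; apply dist_on_scale; auto; lra. Qed.

Lemma dist_on_uniform (l : list nat) : dist_on (fun _ => True) (uniform l).
Proof.
  unfold uniform, dist_on. rewrite Forall_forall. intros [p x] Hin.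
  apply in_map_iff in Hin. destruct Hin as [u [Hu Hin]]. inversion Hu; subst.
  split; auto. simpl. left. apply Rinv_0_lt_compat, lt_0_INR.
  destruct l; [destruct Hin | simpl; lia].
Qed.

Lemma dist_on_weighted (w : nat -> R) l :
  (forall u, 0 <= w u) -> dist_on (fun _ => True) (weighted w l).
Proof.
  intro Hw. unfold weighted, dist_on. rewrite Forall_forall. intros [p x] Hin.
  apply in_map_iff in Hin. destruct Hin as [u [Hu _]]. inversion Hu; subst. split; auto.
  assert (Htot : 0 <= sumR l w) by (apply sumR_nonneg; auto).
  simpl. unfold Rdiv. destruct Htot as [Htot|Htot].
  - apply Rmult_le_pos; auto. left; now apply Rinv_0_lt_compat.
  - unfold sumR in Htot. rewrite <- Htot, Rinv_0; lra.
Qed.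

Lemma dist_on_iid {A} k (m : Defs.dist A) :
  dist_on (fun _ => True) m -> dist_on (fun _ => True) (iid k m).
Proof.
  intro H. induction k as [|k IH]; simpl; [now apply dist_on_ret|].
  apply (dist_on_bind _ _ _ _ H). intros x _.
  apply (dist_on_bind _ _ _ _ IH). intros xs _. now apply dist_on_ret.
Qed.

(** * The color process *)

Definition add_seed (G : state) (u : nat) (us : list nat) : state :=
  mkState (col G ++ [length (seeds G)]) (seeds G ++ [nnodes G])
          (edges G ++ map (fun w => (nnodes G, w)) (u :: us)).

Definition add_member (G : state) (c : nat) (us : list nat) : state :=
  mkState (col G ++ [c]) (seeds G) (edges G ++ map (fun w => (nnodes G, w)) us).

Lemma step_unfold a d i G : step a d i G =
  mix (p_ a i)
    (bind (weighted (deg G) (seq 0 (nnodes G))) (fun u =>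
     bind (iid (d - 1)%nat (uniform (seeds G))) (fun us => ret (add_seed G u us))))
    (bind (uniform (seq 0 (length (seeds G)))) (fun c =>
     bind (iid d (weighted (deg G) (nodes_of_color G c))) (fun us => ret (add_member G c us)))).
Proof. reflexivity. Qed.

Lemma deg_nonneg G u : 0 <= deg G u.
Proof. apply pos_INR. Qed.

Lemma deg_le_app_edges c s e e' u : deg (mkState c s e) u <= deg (mkState c s (e ++ e')) u.
Proof. unfold deg; simpl. apply le_INR. rewrite !filter_app, !length_app. lia. Qed.

Lemma nnodes_snoc G x s e : nnodes (mkState (col G ++ [x]) s e) = S (nnodes G).
Proof. unfold nnodes; simpl. rewrite length_app; simpl. lia. Qed.

Lemma color_of_snoc_old G x s e u : (u < nnodes G)%nat ->
  color_of (mkState (col G ++ [x]) s e) u = color_of G u.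
Proof. intro H. unfold color_of; simpl. now rewrite app_nth1. Qed.

Lemma color_of_snoc_new G x s e : color_of (mkState (col G ++ [x]) s e) (nnodes G) = x.
Proof. unfold color_of, nnodes; simpl. rewrite app_nth2, Nat.sub_diag by lia. reflexivity. Qed.

Lemma nodes_of_color_snoc G x s e c :
  nodes_of_color (mkState (col G ++ [x]) s e) c =
  nodes_of_color G c ++ (if Nat.eqb x c then [nnodes G] else []).
Proof.
  unfold nodes_of_color at 1. rewrite nnodes_snoc, seq_S, filter_app. simpl (0 + _)%nat.
  f_equal.
  - apply filter_ext_in. intros u Hu. apply in_seq in Hu.
    rewrite color_of_snoc_old; [reflexivity | lia].
  - simpl. rewrite color_of_snoc_new. now destruct (Nat.eqb x c).
Qed.

(* Positive seed degrees make every degree-proportional choice a genuine distribution. *)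
Definition wf_state (G : state) : Prop :=
  (1 <= length (seeds G))%nat /\
  forall c, (c < length (seeds G))%nat ->
    (nth c (seeds G) O < nnodes G)%nat /\ color_of G (nth c (seeds G) O) = c /\
    0 < deg G (nth c (seeds G) O).

Lemma wf_total_deg_neq0 G : wf_state G -> sumR (seq 0 (nnodes G)) (deg G) <> 0.
Proof.
  intros [H1 H]. destruct (H 0%nat) as [Hlt [_ Hpos]]; [lia|].
  eapply sumR_neq0; [apply deg_nonneg | | exact Hpos]. apply in_seq. lia.
Qed.

Lemma wf_color_deg_neq0 G c : wf_state G -> (c < length (seeds G))%nat ->
  sumR (nodes_of_color G c) (deg G) <> 0.
Proof.
  intros [_ H] Hc. destruct (H c Hc) as [Hlt [Hcol Hpos]].
  eapply sumR_neq0; [apply deg_nonneg | | exact Hpos].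
  apply filter_In. split; [apply in_seq; lia|]. rewrite Hcol. apply Nat.eqb_refl.
Qed.

Lemma wf_add_seed G u us : wf_state G -> wf_state (add_seed G u us).
Proof.
  intros [H1 H]. unfold add_seed. split; simpl; [rewrite length_app; simpl; lia|].
  intros c Hc. rewrite length_app in Hc. simpl in Hc.
  destruct (Nat.lt_ge_cases c (length (seeds G))) as [Hl|Hl].
  - destruct (H c Hl) as [Hlt [Hcol Hpos]]. rewrite app_nth1 by exact Hl.
    repeat split.
    + rewrite nnodes_snoc. lia.
    + now rewrite color_of_snoc_old.
    + eapply Rlt_le_trans; [exact Hpos | apply (deg_le_app_edges (col G ++ _) (seeds G ++ _))].
  - assert (c = length (seeds G)) by lia. subst c.
    rewrite app_nth2, Nat.sub_diag by lia. simpl. repeat split.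
    + rewrite nnodes_snoc. lia.
    + apply color_of_snoc_new.
    + unfold deg; simpl. rewrite filter_app, !length_app. simpl. rewrite Nat.eqb_refl. simpl.
      apply lt_0_INR. lia.
Qed.

Lemma wf_add_member G c us : wf_state G -> wf_state (add_member G c us).
Proof.
  intros [H1 H]. unfold add_member. split; simpl; [exact H1|].
  intros c' Hc. destruct (H c' Hc) as [Hlt [Hcol Hpos]]. repeat split.
  - rewrite nnodes_snoc. lia.
  - now rewrite color_of_snoc_old.
  - eapply Rlt_le_trans; [exact Hpos | apply (deg_le_app_edges (col G ++ _) (seeds G))].
Qed.

Lemma wf_G2 : wf_state G2.
Proof.
  split; [simpl; lia|]. intros c Hc. simpl in Hc.
  destruct c as [|[|c]]; [| |lia]; unfold color_of, deg; simpl; repeat split.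
  all: unfold nnodes; simpl; lia || lra.
Qed.

Lemma exp_le x y : x <= y -> exp x <= exp y.
Proof. intros [H|H]; [left; now apply exp_increasing | subst; lra]. Qed.

Lemma ln_le x y : 0 < x -> x <= y -> ln x <= ln y.
Proof. intros H [H'|H']; [left; now apply ln_increasing | subst; lra]. Qed.

Lemma p_range a i : 0 <= a -> (3 <= i)%nat -> 0 <= p_ a i <= 1.
Proof.
  intros Ha Hi. unfold p_, Rpower.
  assert (H1 : 1 <= ln (INR i)).
  { rewrite <- (ln_exp 1). apply ln_le; [apply exp_pos|].
    apply Rle_trans with 3; [apply exp_le_3|]. replace 3 with (INR 3) by (simpl; ring). now apply le_INR. }
  assert (0 <= ln (ln (INR i))) by (rewrite <- ln_1; apply ln_le; lra).
  split; [left; apply exp_pos|]. rewrite <- exp_0. apply exp_le. nra.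
Qed.

Definition edge_independent (V : state -> R) : Prop :=
  forall c s e e', V (mkState c s e) = V (mkState c s e').

Lemma expect_step a d i G V : wf_state G -> edge_independent V ->
  expect (step a d i G) V =
    p_ a i * V (add_seed G O []) +
    (1 - p_ a i) * (/ INR (length (seeds G)) *
                    sumR (seq 0 (length (seeds G))) (fun c => V (add_member G c []))).
Proof.
  intros HG HV. rewrite step_unfold, expect_mix, !expect_bind. f_equal.
  - f_equal. rewrite (expect_ext _ _ (fun _ => V (add_seed G O []))).
    + rewrite expect_const, weighted_mass; [ring | now apply wf_total_deg_neq0].
    + intro u. rewrite expect_bind, (expect_ext _ _ (fun _ => V (add_seed G O []))).
      * rewrite expect_const, iid_mass; [ring|]. apply uniform_mass.
        destruct HG as [H1 _]. destruct (seeds G); simpl in H1; [lia | congruence].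
      * intro us. rewrite expect_ret. apply HV.
  - f_equal. rewrite expect_uniform, length_seq. f_equal. apply sumR_ext.
    intros c Hc. apply in_seq in Hc.
    rewrite expect_bind, (expect_ext _ _ (fun _ => V (add_member G c []))).
    + rewrite expect_const, iid_mass; [ring|].
      apply weighted_mass, wf_color_deg_neq0; [exact HG | lia].
    + intro us. rewrite expect_ret. apply HV.
Qed.

Lemma step_dist_on a d i G : wf_state G -> 0 <= p_ a i <= 1 ->
  dist_on (fun G' => wf_state G' /\ nnodes G' = S (nnodes G)) (step a d i G).
Proof.
  intros HG Hp. rewrite step_unfold. apply dist_on_mix; [exact Hp| |].
  - apply (dist_on_bind _ _ _ _ (dist_on_weighted _ _ (deg_nonneg G))). intros u _.
    apply (dist_on_bind _ _ _ _ (dist_on_iid _ _ (dist_on_uniform _))). intros us _.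
    apply dist_on_ret. split; [now apply wf_add_seed | apply nnodes_snoc].
  - apply (dist_on_bind _ _ _ _ (dist_on_uniform _)). intros c _.
    apply (dist_on_bind _ _ _ _ (dist_on_iid _ _ (dist_on_weighted _ _ (deg_nonneg G)))).
    intros us _. apply dist_on_ret. split; [now apply wf_add_member | apply nnodes_snoc].
Qed.

Lemma model_dist_on a d k : 0 <= a ->
  dist_on (fun G => wf_state G /\ nnodes G = (k + 2)%nat) (model_aux a d k).
Proof.
  intro Ha. induction k as [|k IH]; simpl; [now apply dist_on_ret, (conj wf_G2)|].
  apply (dist_on_bind _ _ _ _ IH). intros G [HG Hn].
  eapply dist_on_weaken; [|apply step_dist_on; [exact HG | apply p_range; [exact Ha | lia]]].
  intros G' [HG' Hn']. split; [exact HG' | lia].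
Qed.

Lemma step_mass a d i G : wf_state G -> expect (step a d i G) (fun _ => 1) = 1.
Proof.
  intro HG. rewrite expect_step; [|exact HG | intro; reflexivity].
  rewrite sumR_const, length_seq. destruct HG as [H1 _].
  assert (0 < INR (length (seeds G))) by (apply lt_0_INR; lia). field. lra.
Qed.

Lemma model_mass a d k : 0 <= a -> expect (model_aux a d k) (fun _ => 1) = 1.
Proof.
  intro Ha. induction k as [|k IH]; [exact (expect_ret G2 (fun _ => 1))|].
  change (model_aux a d (S k)) with (bind (model_aux a d k) (step a d (S k + 2))).
  rewrite expect_bind. transitivity (expect (model_aux a d k) (fun _ => 1)); [|exact IH].
  eapply expect_ext_on; [now apply model_dist_on|]. intros G [HG _]. now apply step_mass.
Qed.

Lemma prob_model_le_1 a d n E : 0 <= a -> prob (security_model a d n) E <= 1.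
Proof.
  intro Ha. rewrite prob_expect. unfold security_model.
  eapply Rle_trans; [|right; exact (model_mass a d (n - 2) Ha)].
  eapply expect_le; [now apply model_dist_on|]. intros; simpl; destruct (E x); lra.
Qed.

Lemma model_supermartingale a d (V : nat -> state -> R) s n : 0 <= a -> (2 <= s <= n)%nat ->
  (forall t G, (s <= t < n)%nat -> wf_state G -> nnodes G = t ->
     expect (step a d (S t) G) (V (S t)) <= V t G) ->
  expect (model_aux a d (n - 2)) (V n) <= expect (model_aux a d (s - 2)) (V s).
Proof.
  intros Ha Hsn Hsup.
  assert (Hj : forall j, (s + j <= n)%nat ->
            expect (model_aux a d (s - 2 + j)) (V (s + j)%nat) <=
            expect (model_aux a d (s - 2)) (V s)).
  { induction j as [|j IH]; intro Hj; [rewrite !Nat.add_0_r; lra|].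
    replace (s - 2 + S j)%nat with (S (s - 2 + j)) by lia.
    change (model_aux a d (S (s - 2 + j))) with
      (bind (model_aux a d (s - 2 + j)) (step a d (S (s - 2 + j) + 2))).
    rewrite expect_bind. eapply Rle_trans; [|apply IH; lia].
    eapply expect_le; [now apply model_dist_on|]. intros G [HG Hn].
    replace (S (s - 2 + j) + 2)%nat with (S (s + j)) by lia.
    replace (s + S j)%nat with (S (s + j)) by lia.
    apply Hsup; [lia | exact HG | lia]. }
  specialize (Hj (n - s)%nat ltac:(lia)).
  now replace (s - 2 + (n - s))%nat with (n - 2)%nat in Hj by lia;
    replace (s + (n - s))%nat with n in Hj by lia.
Qed.

Lemma seq_succ_start t n : (t < n)%nat -> seq (S t) (n - t) = S t :: seq (S (S t)) (n - S t).
Proof. intro H. replace (n - t)%nat with (S (n - S t)) by lia. reflexivity. Qed.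

(* [#colors + expected number of colors still to come] is a martingale. *)
Lemma expected_colors_le a d n : 0 <= a -> (2 <= n)%nat ->
  expect (model_aux a d (n - 2)) (fun G => INR (length (seeds G))) <=
  2 + sumR (seq 3 (n - 2)) (p_ a).
Proof.
  intros Ha Hn.
  set (V t G := INR (length (seeds G)) + sumR (seq (S t) (n - t)) (p_ a)).
  assert (Hsup : expect (model_aux a d (n - 2)) (V n) <= expect (model_aux a d (2 - 2)) (V 2%nat)).
  { apply model_supermartingale; [exact Ha | lia|]. intros t G Ht HG Hnodes.
    rewrite expect_step; [|exact HG | intro; reflexivity].
    unfold V, add_seed, add_member; simpl. rewrite length_app, (seq_succ_start t n) by lia.
    rewrite sumR_cons, !sumR_const, length_seq, Nat.add_1_r, S_INR.
    destruct HG as [H1 _]. assert (0 < INR (length (seeds G))) by (apply lt_0_INR; lia).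
    right. field. lra. }
  eapply Rle_trans; [|eapply Rle_trans; [exact Hsup|]].
  - right. apply expect_ext. intro G. unfold V. rewrite Nat.sub_diag. simpl seq. rewrite sumR_nil. ring.
  - simpl. rewrite expect_ret. unfold V. simpl. lra.
Qed.

(** * A supermartingale on the early colors *)

Definition kappa : R := 1 - exp (-1).

Lemma kappa_range : 0 < kappa < 1.
Proof.
  unfold kappa. pose proof (exp_pos (-1)).
  assert (exp (-1) < 1) by (rewrite <- exp_0; apply exp_increasing; lra). lra.
Qed.

Definition early_weight (T0 : R) (G : state) (c : nat) : R :=
  if Rlt_dec (INR (color_time G c)) T0 then exp (- INR (length (nodes_of_color G c))) else 0.

Definition early_weight_sum (T0 : R) (G : state) : R :=
  sumR (seq 0 (length (seeds G))) (early_weight T0 G).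

Lemma early_weight_range T0 G c : 0 <= early_weight T0 G c <= 1.
Proof.
  unfold early_weight. destruct Rlt_dec; [|lra]. split; [left; apply exp_pos|].
  rewrite <- exp_0. apply exp_le. pose proof (pos_INR (length (nodes_of_color G c))). lra.
Qed.

Lemma early_weight_sum_nonneg T0 G : 0 <= early_weight_sum T0 G.
Proof. apply sumR_nonneg. intros; apply early_weight_range. Qed.

Lemma early_weight_sum_le_colors T0 G : early_weight_sum T0 G <= INR (length (seeds G)).
Proof.
  unfold early_weight_sum. apply Rle_trans with (sumR (seq 0 (length (seeds G))) (fun _ => 1)).
  - apply sumR_le. intros; apply early_weight_range.
  - rewrite sumR_const, length_seq. lra.
Qed.

Lemma early_weight_sum_add_seed T0 G : T0 <= INR (S (nnodes G)) ->
  early_weight_sum T0 (add_seed G O []) = early_weight_sum T0 G.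
Proof.
  intro HT. unfold early_weight_sum, add_seed. simpl seeds. rewrite length_app. simpl length.
  rewrite Nat.add_1_r, seq_S, sumR_app. simpl (0 + _)%nat. rewrite sumR_cons, sumR_nil.
  replace (early_weight T0 _ (length (seeds G))) with 0.
  - rewrite !Rplus_0_r. apply sumR_ext. intros c Hc. apply in_seq in Hc.
    unfold early_weight, color_time; simpl. rewrite app_nth1 by lia. rewrite nodes_of_color_snoc.
    destruct (Nat.eqb_spec (length (seeds G)) c); [lia|]. now rewrite app_nil_r.
  - unfold early_weight, color_time; simpl. rewrite app_nth2, Nat.sub_diag by lia. simpl.
    destruct Rlt_dec as [r|r]; [|reflexivity]. change (INR (S (nnodes G)) < T0) in r. lra.
Qed.

Lemma early_weight_sum_add_member T0 G c0 : (c0 < length (seeds G))%nat ->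
  early_weight_sum T0 (add_member G c0 []) = early_weight_sum T0 G - kappa * early_weight T0 G c0.
Proof.
  intro Hc0. unfold early_weight_sum. simpl seeds.
  rewrite (sumR_ext _ _ (fun c => 1 * early_weight T0 G c +
             (-1) * (if Nat.eqb c c0 then kappa * early_weight T0 G c else 0))).
  - rewrite sumR_linear, sumR_seq_indicator by exact Hc0. ring.
  - intros c _. unfold add_member, early_weight, color_time. simpl seeds.
    rewrite nodes_of_color_snoc.
    destruct (Nat.eqb_spec c0 c), (Nat.eqb_spec c c0); try lia.
    + subst. rewrite length_app, plus_INR. simpl (INR (length [_])).
      destruct Rlt_dec; [|ring]. rewrite Ropp_plus_distr, exp_plus.
      replace (- (1)) with (-1) by ring. unfold kappa. ring.
    + rewrite app_nil_r. ring.
Qed.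

Lemma early_weight_sum_add_member_total T0 G :
  sumR (seq 0 (length (seeds G))) (fun c => early_weight_sum T0 (add_member G c [])) =
  (INR (length (seeds G)) - kappa) * early_weight_sum T0 G.
Proof.
  rewrite (sumR_ext _ _ (fun c => early_weight_sum T0 G * 1 + (- kappa) * early_weight T0 G c)).
  - rewrite sumR_linear, sumR_const, length_seq. fold (early_weight_sum T0 G). ring.
  - intros c Hc. apply in_seq in Hc. rewrite early_weight_sum_add_member by lia. ring.
Qed.

Definition colors_at_most (M : R) (G : state) : R :=
  if Rle_dec (INR (length (seeds G))) M then 1 else 0.

Definition decay (a M : R) (n t : nat) : R :=
  exp (- (kappa / M) * sumR (seq (S t) (n - t)) (fun i => 1 - p_ a i)).

Definition potential (a M : R) (n : nat) (T0 : R) (t : nat) (G : state) : R :=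
  colors_at_most M G * early_weight_sum T0 G * decay a M n t.

Lemma decay_succ a M n t : (t < n)%nat ->
  decay a M n t = exp (- (kappa / M) * (1 - p_ a (S t))) * decay a M n (S t).
Proof.
  intro Htn. unfold decay. rewrite (seq_succ_start t n Htn), sumR_cons, <- exp_plus. f_equal. ring.
Qed.

Lemma decay_end a M n : decay a M n n = 1.
Proof. unfold decay. rewrite Nat.sub_diag. simpl seq. rewrite sumR_nil, Rmult_0_r. apply exp_0. Qed.

Lemma potential_nonneg a M n T0 t G : 0 <= potential a M n T0 t G.
Proof.
  unfold potential, colors_at_most. pose proof (early_weight_sum_nonneg T0 G).
  pose proof (exp_pos (- (kappa / M) * sumR (seq (S t) (n - t)) (fun i => 1 - p_ a i))).
  unfold decay. destruct Rle_dec; nra.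
Qed.

Lemma potential_le a M n T0 t G : 0 <= M -> potential a M n T0 t G <= M * decay a M n t.
Proof.
  intro HM. unfold potential, colors_at_most. pose proof (early_weight_sum_nonneg T0 G).
  pose proof (early_weight_sum_le_colors T0 G). pose proof (exp_pos (- (kappa / M) *
    sumR (seq (S t) (n - t)) (fun i => 1 - p_ a i))).
  unfold decay. destruct Rle_dec; nra.
Qed.

Lemma potential_succ a M n T0 t G : (t < n)%nat ->
  potential a M n T0 t G = exp (- (kappa / M) * (1 - p_ a (S t))) * potential a M n T0 (S t) G.
Proof. intro Htn. unfold potential. rewrite decay_succ by exact Htn. ring. Qed.

Lemma potential_add_seed_le a M n T0 t G : T0 <= INR (S (nnodes G)) ->
  potential a M n T0 t (add_seed G O []) <= potential a M n T0 t G.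
Proof.
  intro HT. unfold potential. rewrite early_weight_sum_add_seed by exact HT.
  pose proof (early_weight_sum_nonneg T0 G). pose proof (exp_pos (- (kappa / M) *
    sumR (seq (S t) (n - t)) (fun i => 1 - p_ a i))).
  unfold decay. apply Rmult_le_compat_r, Rmult_le_compat_r; [lra | lra |].
  unfold colors_at_most, add_seed. simpl seeds. rewrite length_app, plus_INR. simpl INR.
  repeat destruct Rle_dec; lra.
Qed.

Lemma potential_add_member_mean a M n T0 t G : wf_state G ->
  / INR (length (seeds G)) *
    sumR (seq 0 (length (seeds G))) (fun c => potential a M n T0 t (add_member G c [])) =
  (1 - kappa / INR (length (seeds G))) * potential a M n T0 t G.
Proof.
  intros [H1 _]. assert (0 < INR (length (seeds G))) by (apply lt_0_INR; lia).
  rewrite (sumR_ext _ _ (fun c => colors_at_most M G * decay a M n t *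
                                  early_weight_sum T0 (add_member G c []) + 0 * 0))
    by (intros; unfold potential, colors_at_most; simpl; ring).
  rewrite sumR_linear, early_weight_sum_add_member_total. unfold potential. field. lra.
Qed.

Lemma potential_mean_rate a M n T0 t G : 0 < M -> wf_state G ->
  (1 - kappa / INR (length (seeds G))) * potential a M n T0 t G <=
  (1 - kappa / M) * potential a M n T0 t G.
Proof.
  intros HM [H1 _]. assert (0 < INR (length (seeds G))) by (apply lt_0_INR; lia).
  pose proof (potential_nonneg a M n T0 t G). pose proof kappa_range.
  destruct (Rle_dec (INR (length (seeds G))) M) as [HC|HC].
  - apply Rmult_le_compat_r; [lra|]. unfold Rdiv.
    apply Rplus_le_compat_l, Ropp_le_contravar, Rmult_le_compat_l; [lra|].
    apply Rinv_le_contravar; lra.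
  - unfold potential, colors_at_most. destruct Rle_dec; [contradiction|]. lra.
Qed.

Lemma potential_step a d M n T0 t G : 0 <= a -> 0 < M -> (2 <= t < n)%nat ->
  T0 <= INR (S t) -> wf_state G -> nnodes G = t ->
  expect (step a d (S t) G) (potential a M n T0 (S t)) <= potential a M n T0 t G.
Proof.
  intros Ha HM Ht HT HG Hnodes.
  pose proof (p_range a (S t) Ha ltac:(lia)) as Hp.
  set (p := p_ a (S t)) in *. set (Psi := potential a M n T0 (S t)).
  pose proof (potential_nonneg a M n T0 (S t) G) as HPsi. fold Psi in HPsi.
  assert (Hseed : Psi (add_seed G O []) <= Psi G)
    by (apply potential_add_seed_le; rewrite Hnodes; exact HT).
  pose proof (potential_mean_rate a M n T0 (S t) G HM HG) as Hrate. fold Psi in Hrate.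
  pose proof (exp_ineq1_le (- (kappa / M) * (1 - p))) as Hexp.
  rewrite expect_step by (exact HG || intro; reflexivity).
  unfold Psi at 2. rewrite potential_add_member_mean by exact HG. fold Psi.
  rewrite potential_succ by lia. fold p Psi.
  apply Rle_trans with ((1 + - (kappa / M) * (1 - p)) * Psi G); [|apply Rmult_le_compat_r; lra].
  assert (p * Psi (add_seed G O []) <= p * Psi G) by (apply Rmult_le_compat_l; lra).
  assert ((1 - p) * ((1 - kappa / INR (length (seeds G))) * Psi G) <=
          (1 - p) * ((1 - kappa / M) * Psi G)) by (apply Rmult_le_compat_l; lra).
  replace ((1 + - (kappa / M) * (1 - p)) * Psi G)
    with (p * Psi G + (1 - p) * ((1 - kappa / M) * Psi G)) by ring.
  lra.
Qed.

Lemma forallb_false_exists {A} (f : A -> bool) l :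
  forallb f l = false -> exists x, In x l /\ f x = false.
Proof.
  induction l as [|x l IH]; simpl; [discriminate|].
  destruct (f x) eqn:Hx; simpl; [|eauto].
  intro H; destruct (IH H) as [y [? ?]]; eauto.
Qed.

(* Pointwise: failure means more than [M] colors, or (by [decay_end]) a potential
   of at least [exp (- B)]. *)
Lemma early_sets_large_indicator_ge a M n T0 B G : 0 < M ->
  1 - INR (length (seeds G)) / M - exp B * potential a M n T0 n G <=
  (if early_sets_large T0 B G then 1 else 0).
Proof.
  intro HM. pose proof (potential_nonneg a M n T0 n G) as Hpot. pose proof (exp_pos B).
  assert (0 <= INR (length (seeds G)) / M)
    by (unfold Rdiv; apply Rmult_le_pos; [apply pos_INR | left; now apply Rinv_0_lt_compat]).
  destruct (early_sets_large T0 B G) eqn:Hlarge; [nra|].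
  apply forallb_false_exists in Hlarge. destruct Hlarge as [c [Hc Hfail]]. apply in_seq in Hc.
  destruct (Rlt_dec (INR (color_time G c)) T0) as [Hct|]; [|discriminate].
  destruct (Rle_dec B (INR (length (nodes_of_color G c)))) as [|Hsmall]; [discriminate|].
  destruct (Rle_dec (INR (length (seeds G))) M) as [HCM|HCM].
  - assert (Hw : early_weight T0 G c <= potential a M n T0 n G).
    { unfold potential, colors_at_most. rewrite decay_end. destruct Rle_dec; [|lra].
      rewrite Rmult_1_l, Rmult_1_r. apply sumR_ge_term; [intros; apply early_weight_range|].
      apply in_seq; lia. }
    unfold early_weight in Hw. destruct Rlt_dec; [|contradiction].
    assert (exp (- B) < exp (- INR (length (nodes_of_color G c))))
      by (apply exp_increasing; lra).
    assert (exp B * exp (- B) = 1) by (rewrite <- exp_plus, Rplus_opp_r; apply exp_0).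
    nra.
  - assert (1 < INR (length (seeds G)) / M).
    { apply Rmult_lt_reg_r with M; [exact HM|]. unfold Rdiv.
      rewrite Rmult_assoc, Rinv_l by lra. lra. }
    assert (0 <= exp B * potential a M n T0 n G) by nra.
    lra.
Qed.

Lemma prob_early_sets_large_ge a d n T0 M B s : 0 <= a -> 0 < M -> (2 <= s <= n)%nat ->
  T0 <= INR (S s) ->
  1 - (2 + sumR (seq 3 (n - 2)) (p_ a)) / M - exp B * (M * decay a M n s)
  <= prob (security_model a d n) (early_sets_large T0 B).
Proof.
  intros Ha HM Hs HT. rewrite prob_expect. unfold security_model.
  set (m := model_aux a d (n - 2)).
  assert (Hm : dist_on (fun G => wf_state G /\ nnodes G = (n - 2 + 2)%nat) m)
    by now apply model_dist_on.
  assert (Hpot : expect m (potential a M n T0 n) <= M * decay a M n s).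
  { eapply Rle_trans; [apply model_supermartingale; [exact Ha | exact Hs|]|].
    - intros t G Ht HG Hnodes. apply potential_step; auto; [lia|].
      eapply Rle_trans; [exact HT|]. apply le_INR. lia.
    - rewrite <- (Rmult_1_l (M * _)), <- (model_mass a d (s - 2) Ha), <- expect_const.
      eapply expect_le; [now apply model_dist_on|]. intros; apply potential_le; lra. }
  pose proof (expected_colors_le a d n Ha ltac:(lia)) as Hcol. fold m in Hcol.
  eapply Rle_trans; [|eapply expect_le; [exact Hm | intros G _;
                       apply (early_sets_large_indicator_ge a M n T0 B G HM)]].
  rewrite (expect_ext _ _ (fun G => 1 * 1 + (- / M) * (INR (length (seeds G)) +
             (M * exp B) * potential a M n T0 n G))) by (intro; field; lra).
  rewrite expect_linear. unfold m at 1. rewrite model_mass by exact Ha.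
  rewrite (expect_ext _ _ (fun G => 1 * INR (length (seeds G)) +
             (M * exp B) * potential a M n T0 n G)) by (intro; ring).
  rewrite expect_linear.
  pose proof (exp_pos B). assert (0 < / M) by (now apply Rinv_0_lt_compat).
  replace (- / M * (1 * expect m (fun G => INR (length (seeds G))) +
           M * exp B * expect m (potential a M n T0 n)))
    with (- (expect m (fun G => INR (length (seeds G))) / M) -
          exp B * expect m (potential a M n T0 n)) by (field; lra).
  assert (expect m (fun G => INR (length (seeds G))) / M <=
          (2 + sumR (seq 3 (n - 2)) (p_ a)) / M)
    by (apply Rmult_le_compat_r; lra).
  assert (exp B * expect m (potential a M n T0 n) <= exp B * (M * decay a M n s))
    by (apply Rmult_le_compat_l; lra).
  lra.
Qed.

(** * Asymptotics *)

Lemma count_le_below (y : R) m : 0 <= y ->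
  sumR (seq 0 m) (fun i => if Rle_dec (INR i) y then 1 else 0) <= y + 1.
Proof.
  intro Hy. induction m as [|m IH]; [simpl seq; rewrite sumR_nil; lra|].
  rewrite seq_S, sumR_app, sumR_cons, sumR_nil. simpl (0 + m)%nat.
  destruct (Rle_dec (INR m) y); [|lra].
  assert (sumR (seq 0 m) (fun i => if Rle_dec (INR i) y then 1 else 0) <= INR m).
  { apply Rle_trans with (sumR (seq 0 m) (fun _ => 1)).
    - apply sumR_le. intros; destruct Rle_dec; lra.
    - rewrite sumR_const, length_seq. lra. }
  lra.
Qed.

Lemma Rpower_neg_antitone x y a : 0 <= a -> 1 <= x -> x <= y -> Rpower y (- a) <= Rpower x (- a).
Proof.
  intros Ha Hx Hxy. unfold Rpower. apply exp_le.
  assert (ln x <= ln y) by (apply ln_le; lra). nra.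
Qed.

(* Splitting the steps at [y]: the early ones contribute at most [1] each, the later ones
   at most [(ln y)^(-a)]. *)
Lemma sum_p_le a n y : 0 <= a -> (2 <= n)%nat -> 0 < y -> 1 <= ln y ->
  sumR (seq 3 (n - 2)) (p_ a) <= y + 1 + (INR n + 1) * Rpower (ln y) (- a).
Proof.
  intros Ha Hn Hy Hly.
  set (f i := (if Rle_dec (INR i) y then 1 else 0) + Rpower (ln y) (- a)).
  assert (Hf0 : forall i, 0 <= f i).
  { intro i. unfold f. pose proof (exp_pos (- a * ln (ln y))). unfold Rpower. destruct Rle_dec; lra. }
  apply Rle_trans with (sumR (seq 3 (n - 2)) f).
  { apply sumR_le. intros i Hi. apply in_seq in Hi. unfold f.
    pose proof (p_range a i Ha ltac:(lia)) as Hp. pose proof (exp_pos (- a * ln (ln y))).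
    destruct (Rle_dec (INR i) y); [unfold Rpower in *; lra|].
    unfold p_. apply Rle_trans with (Rpower (ln y) (- a)); [|lra].
    apply Rpower_neg_antitone; [exact Ha | exact Hly | apply ln_le; lra]. }
  apply Rle_trans with (sumR (seq 0 (n + 1)) f).
  { replace (n + 1)%nat with (3 + (n - 2))%nat by lia. rewrite seq_app, sumR_app.
    assert (0 <= sumR (seq 0 3) f) by (apply sumR_nonneg; auto). simpl (0 + 3)%nat. lra. }
  unfold f. rewrite (sumR_ext _ _ (fun i => 1 * (if Rle_dec (INR i) y then 1 else 0) +
                                            Rpower (ln y) (- a) * 1)) by (intros; ring).
  rewrite sumR_linear, sumR_const, length_seq, plus_INR.
  pose proof (count_le_below y (n + 1) ltac:(lra)). simpl (INR 1). lra.
Qed.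

Lemma Rpower_neg_le_half a x : 1 <= a -> 2 <= x -> Rpower x (- a) <= / 2.
Proof.
  intros Ha Hx. apply Rle_trans with (Rpower x (- (1))); [apply Rle_Rpower; lra|].
  rewrite Rpower_Ropp, Rpower_1 by lra. apply Rinv_le_contravar; lra.
Qed.

Lemma decay_le a M n s : 1 <= a -> 0 < M -> (s <= n)%nat -> 2 <= ln (INR (S s)) ->
  decay a M n s <= exp (- (kappa / M) * ((INR n - INR s) / 2)).
Proof.
  intros Ha HM Hsn Hl. unfold decay. apply exp_le.
  assert (0 < kappa / M) by (pose proof kappa_range; apply Rdiv_lt_0_compat; lra).
  enough ((INR n - INR s) / 2 <= sumR (seq (S s) (n - s)) (fun i => 1 - p_ a i)) by nra.
  apply Rle_trans with (sumR (seq (S s) (n - s)) (fun _ => / 2)).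
  - rewrite sumR_const, length_seq, minus_INR by exact Hsn. lra.
  - apply sumR_le. intros i Hi. apply in_seq in Hi.
    assert (2 <= ln (INR i)).
    { eapply Rle_trans; [exact Hl|]. apply ln_le; [apply lt_0_INR; lia | apply le_INR; lia]. }
    unfold p_. pose proof (Rpower_neg_le_half a (ln (INR i)) Ha ltac:(lra)). lra.
Qed.

Lemma nat_floor x : 0 <= x -> exists s : nat, INR s <= x < INR (S s).
Proof.
  intro Hx. pose proof (Zfloor_bound x) as [Hlo Hhi].
  assert (Hz : (0 <= Zfloor x)%Z) by (apply Zfloor_lub; simpl; lra).
  exists (Z.to_nat (Zfloor x)). rewrite S_INR, INR_IZR_INZ, Z2Nat.id by exact Hz. lra.
Qed.

Lemma ln2_le_1 : ln 2 <= 1.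
Proof. rewrite <- (ln_exp 1). apply ln_le; [lra|]. pose proof (exp_ineq1_le 1). lra. Qed.

Definition color_cap (a eta : R) (n : nat) : R := INR n * Rpower (ln (INR n)) (- (a - eta)).

Definition early_horizon (b0 : R) (n : nat) : R := (1 - Rpower (ln (INR n)) (- b0)) * INR n.

Lemma color_cap_pos a eta n : (1 <= n)%nat -> 0 < color_cap a eta n.
Proof. intro Hn. apply Rmult_lt_0_compat; [apply lt_0_INR; lia | apply exp_pos]. Qed.

Lemma colors_term_le a eta n : 0 <= eta <= a -> (2 <= n)%nat -> 4 <= ln (INR n) ->
  (2 + sumR (seq 3 (n - 2)) (p_ a)) / color_cap a eta n <=
  4 * Rpower (ln (INR n)) (a - eta) / exp (ln (INR n) / 2) +
  2 * Rpower 2 a * Rpower (ln (INR n)) (- eta).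
Proof.
  intros Heta Hn HL. unfold color_cap. set (L := ln (INR n)) in *.
  assert (Hn0 : 0 < INR n) by (apply lt_0_INR; lia).
  set (y := exp (L / 2)). set (u := Rpower L (- (a - eta))).
  set (v := Rpower L (- eta)). set (K := Rpower 2 a).
  assert (Hyy : INR n = y * y).
  { unfold y. rewrite <- exp_plus. replace (L / 2 + L / 2) with L by field.
    unfold L. now rewrite exp_ln. }
  assert (Hy : 1 <= y) by (unfold y; pose proof (exp_ineq1_le (L / 2)); lra).
  assert (Hu : 0 < u) by apply exp_pos. assert (Hv : 0 < v) by apply exp_pos.
  assert (HK : 0 < K) by apply exp_pos.
  assert (Hly : ln y = L / 2) by apply ln_exp.
  assert (Hpow : Rpower (ln y) (- a) = K * (v * u)).
  { rewrite Hly. unfold K, v, u, Rpower. rewrite <- !exp_plus. f_equal.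
    unfold Rdiv. rewrite ln_mult, ln_Rinv by lra. ring. }
  pose proof (sum_p_le a n y ltac:(lra) Hn ltac:(lra) ltac:(lra)) as Hsum.
  rewrite Hpow, Hyy in Hsum. rewrite Hyy.
  apply Rle_trans with ((2 + (y + 1 + (y * y + 1) * (K * (v * u)))) / (y * y * u)).
  { apply Rmult_le_compat_r; [left; apply Rinv_0_lt_compat; nra | lra]. }
  replace ((2 + (y + 1 + (y * y + 1) * (K * (v * u)))) / (y * y * u))
    with ((3 + y) / y * / (y * u) + (1 + / (y * y)) * K * v) by (field; lra).
  replace (4 * Rpower L (a - eta) / y) with (4 * / (y * u))
    by (unfold u, Rpower; rewrite Ropp_mult_distr_l_reverse, exp_Ropp; field;
        split; apply Rgt_not_eq, exp_pos).
  assert ((3 + y) / y <= 4)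
    by (apply Rmult_le_reg_r with y; [lra|]; unfold Rdiv; rewrite Rmult_assoc, Rinv_l by lra; lra).
  assert (/ (y * y) <= 1) by (rewrite <- Rinv_1; apply Rinv_le_contravar; nra).
  assert (0 < / (y * u)) by (apply Rinv_0_lt_compat; nra).
  assert (0 <= K * v) by nra.
  nra.
Qed.

Lemma tail_term_le a b0 eta n s B : 0 < b0 -> eta <= a -> 1 <= a -> (2 <= n)%nat -> 4 <= ln (INR n) ->
  Rpower (ln (INR n)) (- b0) <= / 2 -> INR s <= early_horizon b0 n < INR (S s) ->
  exp B * (color_cap a eta n * decay a (color_cap a eta n) n s) <=
  exp (B + ln (INR n) - kappa / 2 * Rpower (ln (INR n)) (a - eta - b0)).
Proof.
  intros Hb0 Heta Ha Hn HL Hdelta [Hs1 Hs2]. unfold early_horizon in *.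
  set (L := ln (INR n)) in *. set (M := color_cap a eta n).
  assert (Hn0 : 0 < INR n) by (apply lt_0_INR; lia).
  assert (HnL : INR n = exp L) by (unfold L; rewrite exp_ln; auto).
  assert (HM : 0 < M) by (apply color_cap_pos; lia).
  assert (HMn : M <= exp L).
  { rewrite <- HnL. unfold M, color_cap. fold L. rewrite <- (Rmult_1_r (INR n)) at 2.
    apply Rmult_le_compat_l; [lra|]. rewrite <- (Rpower_O L) by lra. apply Rle_Rpower; lra. }
  set (T0 := (1 - Rpower L (- b0)) * INR n) in *.
  pose proof (exp_pos (- b0 * ln L)) as Hd0. change (exp (- b0 * ln L)) with (Rpower L (- b0)) in Hd0.
  assert (Hsn : (s <= n)%nat) by (apply INR_le; unfold T0 in Hs1; nra).
  assert (Hls : 2 <= ln (INR (S s))).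
  { apply Rle_trans with (ln (INR n / 2)).
    - unfold Rdiv. rewrite ln_mult, ln_Rinv by lra. fold L. pose proof ln2_le_1. lra.
    - apply ln_le; [lra|]. unfold T0 in Hs2. nra. }
  pose proof (decay_le a M n s Ha HM Hsn Hls) as Hdec.
  assert (Hexponent : - (kappa / M) * ((INR n - INR s) / 2) <= - (kappa / 2 * Rpower L (a - eta - b0))).
  { assert (Hgap : INR n * Rpower L (- b0) <= INR n - INR s) by (unfold T0 in Hs1; lra).
    replace (kappa / 2 * Rpower L (a - eta - b0)) with (kappa / M * ((INR n * Rpower L (- b0)) / 2)).
    - pose proof kappa_range. assert (0 < kappa / M) by (apply Rdiv_lt_0_compat; lra). nra.
    - unfold M, color_cap. fold L. unfold Rpower.
      replace ((a - eta - b0) * ln L) with (- b0 * ln L + - (- (a - eta) * ln L)) by ring.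
      rewrite exp_plus, exp_Ropp. field. split; [apply Rgt_not_eq, exp_pos | lra]. }
  replace (B + L - kappa / 2 * Rpower L (a - eta - b0)) with (B + (L + - (kappa / 2 * Rpower L (a - eta - b0)))) by ring.
  rewrite !exp_plus. apply Rmult_le_compat_l; [left; apply exp_pos|].
  apply Rmult_le_compat; [lra | left; apply exp_pos | exact HMn |].
  eapply Rle_trans; [exact Hdec | apply exp_le, Hexponent].
Qed.

Definition error_bound (a b1 eta L : R) : R :=
  4 * Rpower L (a - eta) / exp (L / 2) + 2 * Rpower 2 a * Rpower L (- eta) +
  exp (Rpower L b1 + L - kappa / 2 * Rpower L (b1 + eta)).

(* The cap [M = n / (ln n)^(a - eta)] must exceed the expected number [~ n / (ln n)^a]
   of colors, while the [n / (ln n)^b0] steps after [T0] still hit each early color about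
   [(ln n)^(b1 + eta)] times, well above the target size [(ln n)^b1]; [eta] splits the
   slack [a - b0 - b1] evenly between the two requirements. *)
Lemma prob_early_sets_large_ge_error a d b0 b1 n : 0 < b0 -> 1 <= b1 -> b0 + b1 < a ->
  (2 <= n)%nat -> 4 <= ln (INR n) -> Rpower (ln (INR n)) (- b0) <= / 2 ->
  1 - error_bound a b1 ((a - b0 - b1) / 2) (ln (INR n)) <=
  prob (security_model a d n) (early_sets_large (early_horizon b0 n) (Rpower (ln (INR n)) b1)).
Proof.
  intros Hb0 Hb1 Hab Hn HL Hdelta. set (eta := (a - b0 - b1) / 2).
  assert (Hn0 : 0 < INR n) by (apply lt_0_INR; lia).
  assert (Hn5 : 5 <= INR n)
    by (rewrite <- (exp_ln (INR n)) by exact Hn0; pose proof (exp_ineq1_le (ln (INR n))); lra).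
  assert (HT0 : INR n / 2 <= early_horizon b0 n <= INR n).
  { unfold early_horizon. pose proof (exp_pos (- b0 * ln (ln (INR n)))).
    change (exp (- b0 * ln (ln (INR n)))) with (Rpower (ln (INR n)) (- b0)) in H. nra. }
  destruct (nat_floor (early_horizon b0 n)) as [s Hs]; [lra|].
  assert (Hs2 : (2 <= s)%nat) by (destruct s as [|[|s]]; [simpl in Hs; lra.. | lia]).
  assert (Hsn : (s <= n)%nat) by (apply INR_le; lra).
  pose proof (prob_early_sets_large_ge a d n (early_horizon b0 n) (color_cap a eta n)
                (Rpower (ln (INR n)) b1) s ltac:(lra) (color_cap_pos a eta n ltac:(lia))
                ltac:(lia) ltac:(lra)) as Hmain.
  pose proof (colors_term_le a eta n ltac:(unfold eta; lra) Hn HL) as Hcolors.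
  pose proof (tail_term_le a b0 eta n s (Rpower (ln (INR n)) b1) Hb0 ltac:(unfold eta; lra)
                ltac:(lra) Hn HL Hdelta Hs) as Htail.
  replace (a - eta - b0) with (b1 + eta) in Htail by (unfold eta; field).
  unfold error_bound. fold eta. lra.
Qed.

Definition eventually (P : R -> Prop) : Prop := exists L0, forall L, L0 <= L -> P L.

Lemma eventually_and (P Q : R -> Prop) :
  eventually P -> eventually Q -> eventually (fun L => P L /\ Q L).
Proof.
  intros [L1 H1] [L2 H2]. exists (Rmax L1 L2). intros L HL.
  split; [apply H1 | apply H2]; eapply Rle_trans; eauto; [apply Rmax_l | apply Rmax_r].
Qed.

Lemma eventually_of_exp (P : R -> Prop) : eventually (fun l => P (exp l)) -> eventually P.
Proof.
  intros [l0 H]. exists (exp l0). intros L HL. pose proof (exp_pos l0).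
  rewrite <- (exp_ln L) by lra. apply H. rewrite <- (ln_exp l0). apply ln_le; lra.
Qed.

Lemma Rpower_exp_l l x : Rpower (exp l) x = exp (x * l).
Proof. unfold Rpower. now rewrite ln_exp. Qed.

Lemma exp_neg_lt eps X : 0 < eps -> 1 / eps <= X -> exp (- X) < eps.
Proof.
  intros He HX. rewrite exp_Ropp. pose proof (exp_ineq1_le X). pose proof (exp_pos X).
  apply Rmult_lt_reg_r with (exp X); [exact H0|]. rewrite Rinv_l by lra.
  assert (1 <= eps * X).
  { apply Rmult_le_reg_l with (/ eps); [now apply Rinv_0_lt_compat|].
    rewrite <- Rmult_assoc, Rinv_l, Rmult_1_l, Rmult_1_r by lra. unfold Rdiv in HX. lra. }
  nra.
Qed.

Lemma exp_linear_over_exp_exp_vanishes c eps : 0 < eps ->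
  eventually (fun l => 4 * exp (c * l) / exp (exp l / 2) < eps).
Proof.
  intro He. set (X := 4 / eps). assert (HX : 0 < X) by (apply Rdiv_lt_0_compat; lra).
  exists (8 * Rabs c + 8 * X + 8). intros l Hl.
  pose proof (Rle_abs c). pose proof (Rabs_pos c).
  assert (Hexp : (1 + l / 2) * (1 + l / 2) <= exp l).
  { replace l with (l / 2 + l / 2) at 3 by field. rewrite exp_plus.
    pose proof (exp_ineq1_le (l / 2)). apply Rmult_le_compat; lra. }
  replace (4 * exp (c * l) / exp (exp l / 2)) with (4 * exp (- (exp l / 2 - c * l))).
  2: { rewrite Ropp_minus_distr. unfold Rminus. rewrite exp_plus, exp_Ropp. field.
       apply Rgt_not_eq, exp_pos. }
  assert (exp (- (exp l / 2 - c * l)) < eps / 4); [|lra].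
  apply exp_neg_lt; [lra|]. replace (1 / (eps / 4)) with X by (unfold X; field; lra).
  assert (c * l <= Rabs c * l) by nra. nra.
Qed.

Lemma exp_neg_linear_vanishes K eta eps : 0 <= K -> 0 < eta -> 0 < eps ->
  eventually (fun l => K * exp (- eta * l) < eps).
Proof.
  intros HK He Hep. exists ((K + 1) / eps / eta). intros l Hl.
  assert (Hsmall : exp (- (eta * l)) < eps / (K + 1)).
  { apply exp_neg_lt; [apply Rdiv_lt_0_compat; lra|].
    replace (1 / (eps / (K + 1))) with ((K + 1) / eps) by (field; lra).
    apply Rmult_le_reg_r with (/ eta); [now apply Rinv_0_lt_compat|].
    replace (eta * l * / eta) with l by (field; lra). exact Hl. }
  replace (- eta * l) with (- (eta * l)) by ring.
  apply Rmult_lt_compat_r with (r := K + 1) in Hsmall; [|lra].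
  replace (eps / (K + 1) * (K + 1)) with eps in Hsmall by (field; lra).
  pose proof (exp_pos (- (eta * l))). nra.
Qed.

Lemma exp_tail_vanishes b1 eta eps : 1 <= b1 -> 0 < eta -> 0 < eps ->
  eventually (fun l => exp (exp (b1 * l) + exp l - kappa / 2 * exp ((b1 + eta) * l)) < eps).
Proof.
  intros Hb He Hep. set (W := 1 / eps). assert (HW : 0 < W) by (apply Rdiv_lt_0_compat; lra).
  pose proof kappa_range as Hk.
  exists (2 * (2 + W) / kappa / eta). intros l Hl.
  assert (Hl0 : 0 <= l) by (eapply Rle_trans; [|exact Hl]; left; repeat apply Rdiv_lt_0_compat; lra).
  set (P := exp (b1 * l)). set (Q := exp (eta * l)).
  assert (HP : 1 <= P) by (unfold P; rewrite <- exp_0; apply exp_le; nra).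
  assert (HQ : 2 + W <= kappa / 2 * Q).
  { assert (2 * (2 + W) / kappa <= eta * l).
    { apply Rmult_le_reg_r with (/ eta); [now apply Rinv_0_lt_compat|].
      replace (eta * l * / eta) with l by (field; lra). exact Hl. }
    pose proof (exp_ineq1_le (eta * l)). fold Q in H0.
    apply Rmult_le_reg_r with (2 / kappa); [apply Rdiv_lt_0_compat; lra|].
    replace (kappa / 2 * Q * (2 / kappa)) with Q by (field; lra).
    replace ((2 + W) * (2 / kappa)) with (2 * (2 + W) / kappa) by (field; lra). lra. }
  assert (Hel : exp l <= P) by (unfold P; apply exp_le; nra).
  rewrite Rmult_plus_distr_r, exp_plus. fold P Q.
  eapply Rle_lt_trans; [|apply (exp_neg_lt eps (W * P) Hep)].
  - apply exp_le. nra.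
  - fold W. nra.
Qed.

Lemma error_bound_vanishes a b1 eta eps : 1 <= b1 -> 0 < eta -> 0 < eps ->
  eventually (fun L => error_bound a b1 eta L < eps).
Proof.
  intros Hb1 Heta Heps. apply eventually_of_exp.
  destruct (eventually_and _ _ (exp_linear_over_exp_exp_vanishes (a - eta) (eps / 3) ltac:(lra))
             (eventually_and _ _
                (exp_neg_linear_vanishes (2 * Rpower 2 a) eta (eps / 3)
                   ltac:(pose proof (exp_pos (a * ln 2)); unfold Rpower; lra) Heta ltac:(lra))
                (exp_tail_vanishes b1 eta (eps / 3) Hb1 Heta ltac:(lra))))
    as [l0 Hl0].
  exists l0. intros l Hl. destruct (Hl0 l Hl) as [H1 [H2 H3]].
  unfold error_bound. rewrite !Rpower_exp_l. lra.
Qed.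

Lemma ln_conditions_eventually b0 : 0 < b0 ->
  eventually (fun L => 4 <= L /\ Rpower L (- b0) <= / 2).
Proof.
  intro Hb. apply eventually_of_exp. exists (3 + 1 / b0). intros l Hl.
  assert (0 < 1 / b0) by (apply Rdiv_lt_0_compat; lra).
  rewrite Rpower_exp_l. split; [pose proof (exp_ineq1_le l); lra|].
  replace (- b0 * l) with (- (b0 * l)) by ring. rewrite exp_Ropp.
  apply Rinv_le_contravar; [lra|]. pose proof (exp_ineq1_le (b0 * l)).
  assert (1 <= b0 * l).
  { apply Rmult_le_reg_r with (/ b0); [now apply Rinv_0_lt_compat|].
    replace (b0 * l * / b0) with l by (field; lra). unfold Rdiv in *. lra. }
  lra.
Qed.

Lemma ln_nat_unbounded L0 : exists N, forall n, (N <= n)%nat -> (2 <= n)%nat /\ L0 <= ln (INR n).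
Proof.
  destruct (nat_floor (exp L0)) as [s [_ Hs]]; [left; apply exp_pos|].
  exists (S s + 2)%nat. intros n Hn. split; [lia|].
  rewrite <- (ln_exp L0). apply ln_le; [apply exp_pos|].
  eapply Rle_trans; [left; exact Hs | apply le_INR; lia].
Qed.

Theorem lemma13 (a : R) (d : nat) (b0 b1 : R) :
  4 < a -> (4 <= d)%nat -> 0 < b0 -> 2 < b1 -> b1 < a - b0 ->
  exists K : R, 0 < K /\
    Un_cv (fun n : nat =>
      prob (security_model a d n)
        (early_sets_large
           ((1 - Rpower (ln (INR n)) (- b0)) * INR n)
           (K * Rpower (ln (INR n)) b1)))
      1.
Proof.
  intros Ha Hd Hb0 Hb1 Hb. exists 1. split; [lra|]. intros eps Heps.
  destruct (eventually_and _ _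
              (error_bound_vanishes a b1 ((a - b0 - b1) / 2) eps ltac:(lra) ltac:(lra) Heps)
              (ln_conditions_eventually b0 Hb0)) as [L0 HL0].
  destruct (ln_nat_unbounded L0) as [N HN]. exists N. intros n Hn.
  destruct (HN n Hn) as [Hn2 HL]. destruct (HL0 _ HL) as [Herr [HL4 Hdelta]].
  pose proof (prob_early_sets_large_ge_error a d b0 b1 n Hb0 ltac:(lra) ltac:(lra)
                Hn2 HL4 Hdelta) as Hlow.
  pose proof (prob_model_le_1 a d n
                (early_sets_large (early_horizon b0 n) (Rpower (ln (INR n)) b1)) ltac:(lra)) as Hup.
  unfold early_horizon in Hlow, Hup. rewrite Rmult_1_l. unfold R_dist.
  rewrite Rabs_left1; lra.
Qed.
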